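(* Let $R$ be a ring with identity, ${}_RM$ a finitely generated semisimple left $R$-module, $\varphi:M\to M$ a nilpotent $R$-endomorphism, and $\{x_{\gamma,i}\mid\gamma\in\Gamma,1\le i\le k_\gamma\}$ a nilpotent Jordan normal base of ${}_RM$ with respect to $\varphi$, with $\Gamma$ finite. Let $\Phi:(R[t])^\Gamma\to M$, $\Phi(\mathbf f)=\sum_{\gamma\in\Gamma}f_\gamma(t)\ast x_{\gamma,1}$, and \[\mathcal M(\Phi)=\{\mathbf P\in M_{\Gamma\times\Gamma}(R[t])\mid \mathbf f\mathbf P\in\ker(\Phi)\text{ for all }\mathbf f\in\ker(\Phi)\}.\] Then $\mathcal M(\Phi)$ is a $Z(R)$-subalgebra of $M_{\Gamma\times\Gamma}(R[t])$. For $\mathbf P\in\mathcal M(\Phi)$, the formula $\psi_{\mathbf P}(\Phi(\mathbf f))=\Phi(\mathbf f\mathbf P)$ ($\mathbf f\in(R[t])^\Gamma$) properly defines an $R$-endomorphism $\psi_{\mathbf P}:M\to M$ with $\psi_{\mathbf P}\circ\varphi=\varphi\circ\psi_{\mathbf P}$, and the assignment $\mathbf P\mapsto\psi_{\mathbf P}$ is a homomorphism of $Z(R)$-algebras $\mathcal M(\Phi)^{\mathrm{op}}\to C_\varphi$.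
   Context: A nilpotent Jordan normal base of ${}_RM$ with respect to $\varphi$ is a subset $\{x_{\gamma,i}\}$ (integers $k_\gamma\ge1$) such that each $Rx_{\gamma,i}$ is simple, $M=\bigoplus_{\gamma,i}Rx_{\gamma,i}$, $\varphi(x_{\gamma,i})=x_{\gamma,i+1}$ for $i<k_\gamma$, $\varphi(x_{\gamma,k_\gamma})=0$. $R[t]$ is the polynomial ring in a commuting indeterminate; $M$ is a left $R[t]$-module via $(a_1+a_2t+\cdots+a_{n+1}t^n)\ast u=a_1u+a_2\varphi(u)+\cdots+a_{n+1}\varphi^n(u)$. Elements of $(R[t])^\Gamma$ are viewed as $1\times\Gamma$ row vectors (after fixing a linear order on $\Gamma$) and $\mathbf f\mathbf P$ is the matrix product. $Z(R)$ is the centre of $R$, and $C_\varphi=\{\psi\in\mathrm{Hom}_R(M,M)\mid\psi\circ\varphi=\varphi\circ\psi\}$. *)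

From HB Require Import structures.
From mathcomp Require Import all_boot all_order all_algebra.
Set Implicit Arguments. Unset Strict Implicit. Unset Printing Implicit Defensive.
Import GRing.Theory.
Local Open Scope ring_scope.

Section Defs.
Variables (R : nzRingType) (M : lmodType R).

Definition submodule (S : M -> Prop) :=
  [/\ S 0, (forall u v, S u -> S v -> S (u + v)) & (forall r u, S u -> S (r *: u))].

Definition Rspan (x : M) : M -> Prop := fun u => exists r : R, u = r *: x.

Definition simple_Rspan (x : M) :=
  (exists u, Rspan x u /\ u <> 0) /\
  forall S, submodule S -> (forall u, S u -> Rspan x u) ->
    (forall u, S u -> u = 0) \/ (forall u, Rspan x u -> S u).

Definition semisimple :=
  forall S, submodule S -> exists T, submodule T /\
    (forall u, S u -> T u -> u = 0) /\
    (forall u, exists a b, [/\ S a, T b & u = a + b]).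

Definition fin_gen :=
  exists (m : nat) (g : 'I_m -> M), forall u, exists c : 'I_m -> R,
    u = \sum_(i < m) c i *: g i.

Definition nilpotent_endo (phi : M -> M) := exists m, forall u, iter m phi u = 0.

(* The R[t]-action on M via phi: (sum a_i t^i) * u = sum a_i phi^i(u). *)
Definition poly_act (phi : M -> M) (p : {poly R}) (u : M) : M :=
  \sum_(i < size p) p`_i *: iter i phi u.

(* Nilpotent Jordan normal base {x_(g,i) | g in 'I_n, 0 <= i < k g}
   (indices i shifted by one w.r.t. the paper: x g 0 is x_(g,1)). *)
Definition jordan_base (phi : M -> M) (n : nat) (k : 'I_n -> nat)
    (x : 'I_n -> nat -> M) :=
  [/\ (forall g, 0 < k g)%N,
      (forall g i, (i < k g)%N -> simple_Rspan (x g i)) &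
  [/\
      (forall g i, (i.+1 < k g)%N -> phi (x g i) = x g i.+1),
      (forall g, phi (x g (k g).-1) = 0),
      (forall u, exists c : 'I_n -> nat -> M,
          (forall g i, (i < k g)%N -> Rspan (x g i) (c g i)) /\
          u = \sum_(g < n) \sum_(i < k g) c g i) &
      (forall c : 'I_n -> nat -> M,
          (forall g i, (i < k g)%N -> Rspan (x g i) (c g i)) ->
          \sum_(g < n) \sum_(i < k g) c g i = 0 ->
          forall g i, (i < k g)%N -> c g i = 0)]].

Definition PhiMap (phi : M -> M) (n : nat) (x : 'I_n -> nat -> M)
    (f : 'rV[{poly R}]_n) : M :=
  \sum_(g < n) poly_act phi (f 0 g) (x g 0%N).

Definition MPhi (phi : M -> M) (n : nat) (x : 'I_n -> nat -> M)
    (P : 'M[{poly R}]_n) : Prop :=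
  forall f : 'rV[{poly R}]_n, PhiMap phi x f = 0 -> PhiMap phi x (f *m P) = 0.

Definition is_psi (phi : M -> M) (n : nat) (x : 'I_n -> nat -> M)
    (P : 'M[{poly R}]_n) (psi : M -> M) : Prop :=
  forall f : 'rV[{poly R}]_n, psi (PhiMap phi x f) = PhiMap phi x (f *m P).

End Defs.

Definition central (R : nzRingType) (z : R) := forall r : R, z * r = r * z.

From HB Require Import structures.
From mathcomp Require Import all_boot all_order all_algebra.
From mathcomp Require Import zify.
Import GRing.Theory.
Local Open Scope ring_scope.

(* Phi is additive, turns scaling by constant polynomials r%:P into r *: _
   and scaling by t into phi. A matrix P preserving ker Phi thus induces
   Phi f |-> Phi (f P) on the image of Phi, and each claimed property of
   psi_P is read off from the corresponding identity of row-vector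
   arithmetic. The only input from the Jordan base is that Phi is onto (the
   x_(g,i) = phi^i (x_(g,1)) span M). *)

Section PolyAct.
Variables (R : nzRingType) (M : lmodType R) (phi : {linear M -> M}).

Lemma poly_act_widen (m : nat) (p : {poly R}) u : (size p <= m)%N ->
  poly_act phi p u = \sum_(i < m) p`_i *: iter i phi u.
Proof.
move=> le_pm; rewrite /poly_act (big_ord_widen m (fun i => p`_i *: iter i phi u) le_pm).
rewrite big_mkcond; apply: eq_bigr => i _; case: ifP => // /negbT.
by rewrite -leqNgt => /(nth_default 0) ->; rewrite scale0r.
Qed.

Lemma poly_act0 u : poly_act phi 0 u = 0.
Proof. by rewrite /poly_act size_poly0 big_ord0. Qed.

Lemma poly_act1 u : poly_act phi 1 u = u.
Proof. by rewrite /poly_act size_poly1 big_ord1 coefC scale1r. Qed.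

Lemma poly_actD p q u :
  poly_act phi (p + q) u = poly_act phi p u + poly_act phi q u.
Proof.
rewrite !(poly_act_widen (size (p + q)%R + size p + size q)); try lia.
by rewrite -big_split; apply: eq_bigr => i _; rewrite coefD scalerDl.
Qed.

Lemma poly_actCM r p u : poly_act phi (r%:P * p) u = r *: poly_act phi p u.
Proof.
rewrite !(poly_act_widen (size (r%:P * p)%R + size p)); try lia.
by rewrite scaler_sumr; apply: eq_bigr => i _; rewrite coefCM scalerA.
Qed.

Lemma poly_actXM p u : poly_act phi ('X * p) u = phi (poly_act phi p u).
Proof.
set m := (size ('X * p)%R + size p)%N.
rewrite (poly_act_widen m.+1) ?(poly_act_widen m) /m; try lia.
rewrite big_ord_recl coefXM scale0r add0r.
by rewrite linear_sum; apply: eq_bigr => i _; rewrite coefXM linearZ.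
Qed.

End PolyAct.

Section PhiMap.
Context {R : nzRingType} {M : lmodType R} {phi : {linear M -> M}}.
Context {n : nat} {x : 'I_n -> nat -> M}.

Local Notation Phi := (PhiMap phi x).

Lemma PhiMap0 : Phi 0 = 0.
Proof. by rewrite /PhiMap big1 // => g _; rewrite mxE poly_act0. Qed.

Lemma PhiMapD f g : Phi (f + g) = Phi f + Phi g.
Proof. by rewrite /PhiMap -big_split; apply: eq_bigr => i _; rewrite mxE poly_actD. Qed.

Lemma PhiMapN f : Phi (- f) = - Phi f.
Proof. by apply/eqP; rewrite -subr_eq0 opprK addrC -PhiMapD subrr PhiMap0. Qed.

Lemma PhiMapZC r f : Phi (r%:P *: f) = r *: Phi f.
Proof.
by rewrite /PhiMap scaler_sumr; apply: eq_bigr => i _; rewrite mxE poly_actCM.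
Qed.

Lemma PhiMapZX f : Phi ('X *: f) = phi (Phi f).
Proof.
by rewrite /PhiMap linear_sum; apply: eq_bigr => i _; rewrite mxE poly_actXM.
Qed.

Lemma PhiMapZXn i f : Phi ('X^i *: f) = iter i phi (Phi f).
Proof. by elim: i => [|i IHi]; rewrite ?scale1r // exprS -scalerA PhiMapZX IHi. Qed.

Lemma PhiMap_delta g : Phi (delta_mx 0 g) = x g 0%N.
Proof.
rewrite /PhiMap (bigD1 g) //= big1 ?addr0 => [|h /negbTE nhg].
  by rewrite mxE !eqxx poly_act1.
by rewrite mxE nhg andbF poly_act0.
Qed.

Lemma jordan_base_iter {k g i} : jordan_base phi k x -> (i < k g)%N ->
  iter i phi (x g 0%N) = x g i.
Proof.
case=> _ _ [shift _ _ _]; elim: i => [//|i IHi] lt_ik /=.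
by rewrite IHi ?shift // ltnW.
Qed.

Lemma PhiMap_surj {k} : jordan_base phi k x -> forall u, exists f, Phi f = u.
Proof.
move=> jb u; have [_ _ [_ _ span _]] := jb; have [c [c_span ->]] := span u.
pose in_image v := exists f, Phi f = v.
have imageD v w : in_image v -> in_image w -> in_image (v + w).
  by move=> [f <-] [h <-]; exists (f + h); rewrite PhiMapD.
apply: (big_ind in_image) => [|//|g _]; first by exists 0; rewrite PhiMap0.
apply: (big_ind in_image) => [|//|i _]; first by exists 0; rewrite PhiMap0.
have [r ->] := c_span g i (ltn_ord i).
exists (r%:P *: ('X^i *: delta_mx 0 g)).
by rewrite PhiMapZC PhiMapZXn PhiMap_delta (jordan_base_iter jb (ltn_ord i)).
Qed.

Lemma MPhi1 : MPhi phi x 1%:M.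
Proof. by move=> f; rewrite mulmx1. Qed.

Lemma MPhi0 : MPhi phi x 0.
Proof. by move=> f _; rewrite mulmx0 PhiMap0. Qed.

Lemma MPhiD P Q : MPhi phi x P -> MPhi phi x Q -> MPhi phi x (P + Q).
Proof. by move=> PP PQ f Pf; rewrite mulmxDr PhiMapD PP // PQ // addr0. Qed.

Lemma MPhiN P : MPhi phi x P -> MPhi phi x (- P).
Proof. by move=> PP f Pf; rewrite mulmxN PhiMapN PP // oppr0. Qed.

Lemma MPhiM P Q : MPhi phi x P -> MPhi phi x Q -> MPhi phi x (P *m Q).
Proof. by move=> PP PQ f Pf; rewrite mulmxA PQ // PP. Qed.

Lemma MPhi_eq P f h : MPhi phi x P -> Phi f = Phi h -> Phi (f *m P) = Phi (h *m P).
Proof.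
move=> PP Efh; apply/eqP; rewrite -subr_eq0 -PhiMapN -PhiMapD -mulNmx -mulmxDl.
by rewrite PP // PhiMapD PhiMapN Efh subrr.
Qed.

Lemma is_psi1 : is_psi phi x 1%:M id.
Proof. by move=> f; rewrite mulmx1. Qed.

Lemma is_psiD P Q psiP psiQ : is_psi phi x P psiP -> is_psi phi x Q psiQ ->
  is_psi phi x (P + Q) (fun u => psiP u + psiQ u).
Proof. by move=> psiPE psiQE f; rewrite psiPE psiQE mulmxDr PhiMapD. Qed.

Lemma is_psiM P Q psiP psiQ : is_psi phi x P psiP -> is_psi phi x Q psiQ ->
  is_psi phi x (P *m Q) (fun u => psiQ (psiP u)).
Proof. by move=> psiPE psiQE f; rewrite psiPE psiQE mulmxA. Qed.

Section Surjective.
Hypothesis Phi_onto : forall u, exists f, Phi f = u.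

Lemma is_psi_exists {P} : MPhi phi x P -> exists psi, is_psi phi x P psi.
Proof.
move=> PP; have Phi_onto_eq u : exists f, Phi f == u.
  by have [f <-] := Phi_onto u; exists f.
exists (fun u => Phi (xchoose (Phi_onto_eq u) *m P)) => f.
by apply: MPhi_eq => //; rewrite (eqP (xchooseP (Phi_onto_eq _))).
Qed.

Lemma is_psi_unique P psi1 psi2 :
  is_psi phi x P psi1 -> is_psi phi x P psi2 -> psi1 =1 psi2.
Proof. by move=> psi1E psi2E u; have [f <-] := Phi_onto u; rewrite psi1E psi2E. Qed.

Lemma is_psi_linear {P psi} : is_psi phi x P psi ->
  forall r u v, psi (r *: u + v) = r *: psi u + psi v.
Proof.
move=> psiE r u v; have [f <-] := Phi_onto u; have [h <-] := Phi_onto v.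
by rewrite -PhiMapZC -PhiMapD !psiE mulmxDl -scalemxAl PhiMapD PhiMapZC.
Qed.

Lemma is_psi_comm {P psi} : is_psi phi x P psi -> forall u, psi (phi u) = phi (psi u).
Proof.
by move=> psiE u; have [f <-] := Phi_onto u; rewrite -PhiMapZX !psiE -scalemxAl PhiMapZX.
Qed.

End Surjective.

Section Central.
Context {z : R} (z_central : central z).

Lemma mulmxZ_central (f : 'rV[{poly R}]_n) (P : 'M_n) :
  f *m (z%:P *: P) = z%:P *: (f *m P).
Proof.
apply/matrixP => i j; rewrite !mxE mulr_sumr; apply: eq_bigr => l _.
have zP_comm (p : {poly R}) : p * z%:P = z%:P * p.
  by apply/polyP => m; rewrite coefCM coefMC z_central.
by rewrite mxE mulrA zP_comm mulrA.
Qed.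

Lemma MPhiZ_central P : MPhi phi x P -> MPhi phi x (z%:P *: P).
Proof. by move=> PP f Pf; rewrite mulmxZ_central PhiMapZC PP // scaler0. Qed.

Lemma is_psiZ_central P psi : is_psi phi x P psi ->
  is_psi phi x (z%:P *: P) (fun u => z *: psi u).
Proof. by move=> psiE f; rewrite psiE mulmxZ_central PhiMapZC. Qed.

End Central.

End PhiMap.

Theorem lemma4p1 (R : nzRingType) (M : lmodType R) (phi : {linear M -> M})
    (n : nat) (k : 'I_n -> nat) (x : 'I_n -> nat -> M) :
  fin_gen M -> semisimple M -> nilpotent_endo phi -> jordan_base phi k x ->
  [/\
   [/\ MPhi phi x 1%:M, MPhi phi x 0 &
   [/\
       (forall P Q, MPhi phi x P -> MPhi phi x Q -> MPhi phi x (P + Q)),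
       (forall P, MPhi phi x P -> MPhi phi x (- P)),
       (forall P Q, MPhi phi x P -> MPhi phi x Q -> MPhi phi x (P *m Q)) &
       (forall (z : R) P, central z -> MPhi phi x P -> MPhi phi x (z%:P *: P))]],
   (forall P, MPhi phi x P ->
      (exists psi : M -> M, [/\ is_psi phi x P psi,
          (forall (r : R) u v, psi (r *: u + v) = r *: psi u + psi v) &
          (forall u, psi (phi u) = phi (psi u))]) /\
      (forall psi1 psi2, is_psi phi x P psi1 -> is_psi phi x P psi2 ->
          psi1 =1 psi2)) &
   is_psi phi x 1%:M id /\
   (forall P Q psiP psiQ, MPhi phi x P -> MPhi phi x Q ->
      is_psi phi x P psiP -> is_psi phi x Q psiQ ->
      [/\ is_psi phi x (P + Q) (fun u => psiP u + psiQ u),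
          is_psi phi x (P *m Q) (fun u => psiQ (psiP u)) &
          (forall z : R, central z ->
             is_psi phi x (z%:P *: P) (fun u => z *: psiP u))])].
Proof.
move=> _ _ _ jb; have Phi_onto := PhiMap_surj jb.
split.
- split; [exact: MPhi1 | exact: MPhi0 |].
  split; [exact: MPhiD | exact: MPhiN | exact: MPhiM |].
  by move=> z P z_central; apply: MPhiZ_central.
- move=> P PP; split; last exact: is_psi_unique.
  have [psi psiE] := is_psi_exists Phi_onto PP.
  by exists psi; split; [| exact: is_psi_linear psiE | exact: is_psi_comm psiE].
- split; first exact: is_psi1.
  move=> P Q psiP psiQ _ _ psiPE psiQE.
  split; [exact: is_psiD | exact: is_psiM |].
  by move=> z z_central; exact: is_psiZ_central.
Qed.
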